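(* Let $\mathcal G=(V,E,\lambda)$ be a temporal graph with lifetime $T_{\max}$, let $\delta\in\mathbb N^+$, let $S\subseteq V\times[0,T_{\max}]$ be a set of seed infections, and let $L_1,L_2\subseteq V^2\times[0,T_{\max}]$ be two infection logs consistent with $S$. Then the induced infection timetables $T_i=\{(v,t)\mid (u,v,t)\in L_i\}$, $i=1,2$, are equal: $T_1=T_2$.
   Context: A temporal graph $\mathcal G=(V,E,\lambda)$ with lifetime $T_{\max}$ consists of a finite undirected static graph $(V,E)$ and a labeling $\lambda:E\to\{1,\dots,T_{\max}\}$; edge $e$ is present only at time $\lambda(e)$. Infection model with parameter $\delta$: given seed infections $S$, a seed $(u,t)$ makes $u$ infected at time $t$; otherwise a susceptible node $u$ becomes infected at time $t$ iff some neighbour $v$ infectious at time $t$ has $\lambda(uv)=t$; if several such neighbours exist, $u$ is infected by exactly one of them (any one). A node infected at time $t$ is infectious at times $t+1,\dots,t+\delta$ and resistant afterwards. The infection log of an infection chain is the set of triples $(u,v,t)$ meaning $u$ infected $v$ at time $t$ (a seed infection of $u$ at $t$ is recorded as $(u,u,t)$). A log is consistent with $S$ if some infection chain seeded with $S$ produces it. *)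

From mathcomp Require Import all_boot.
Set Implicit Arguments. Unset Strict Implicit. Unset Printing Implicit Defensive.

(* The label of
   the undirected edge {u,v} is tg_lam u v = tg_lam v u; values of tg_lam
   on non-edges are irrelevant. *)
Record temporal_graph (V : finType) (Tmax : nat) := TemporalGraph {
  tg_adj : rel V;
  tg_lam : V -> V -> nat;
  tg_sym : symmetric tg_adj;
  tg_irr : irreflexive tg_adj;
  tg_lam_sym : forall u v, tg_lam u v = tg_lam v u;
  tg_lam_range : forall u v, tg_adj u v -> 0 < tg_lam u v <= Tmax
}.

Section Infection.
Variables (V : finType) (Tmax : nat).
Notation time := 'I_Tmax.+1.

(* An infection chain: for each node v, either None (never infected) or
   Some (u, t): v was infected by u at time t (u = v for a seed infection). *)
Definition chain := V -> option (V * time).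

Definition infectious (delta : nat) (f : chain) (v : V) (t : nat) : Prop :=
  exists (u : V) (t' : time), f v = Some (u, t') /\ t' < t <= t' + delta.

Definition susceptible (f : chain) (v : V) (t : nat) : Prop :=
  forall (u : V) (t' : time), f v = Some (u, t') -> t <= t'.

Definition is_infection_chain (G : temporal_graph V Tmax) (delta : nat)
    (S : {set V * time}) (f : chain) : Prop :=
  (forall (v u : V) (t : time), f v = Some (u, t) ->
      ((v, t) \in S /\ u = v)
      \/ ((v, t) \notin S /\ tg_adj G u v /\ tg_lam G u v = t
          /\ infectious delta f u t))
  /\
  (forall (v : V) (t : time), susceptible f v t ->
      ((v, t) \in S \/
       exists u, tg_adj G u v /\ tg_lam G u v = t /\ infectious delta f u t) ->
      exists u, f v = Some (u, t)).

Definition infection_log (f : chain) : {set V * V * time} :=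
  [set x : V * V * time | f x.1.2 == Some (x.1.1, x.2)].

Definition consistent_log (G : temporal_graph V Tmax) (delta : nat)
    (S : {set V * time}) (L : {set V * V * time}) : Prop :=
  exists f : chain, is_infection_chain G delta S f /\ L = infection_log f.

Definition timetable (L : {set V * V * time}) : {set V * time} :=
  [set x : V * time | [exists u : V, ((u, x.1), x.2) \in L]].

End Infection.

From mathcomp Require Import all_boot.

(* Two chains seeded with S may differ in who infects whom, but not in when
   each node is infected.  By strong induction on t: if both chains agree on
   all infections before t, then a node is susceptible at t, and has a seed or
   an infectious neighbour along an edge present at t, in one chain iff in the
   other, so soundness of one chain and completeness of the other transfer an
   infection at t. *)

Set Implicit Arguments. Unset Strict Implicit. Unset Printing Implicit Defensive.

Section InfectionTimes.
Variables (V : finType) (Tmax : nat).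
Notation time := 'I_Tmax.+1.

Definition infection_time (f : chain V Tmax) (v : V) : option time :=
  omap snd (f v).

Lemma infection_timeP (f : chain V Tmax) (v : V) (t : time) :
  reflect (exists u, f v = Some (u, t)) (infection_time f v == Some t).
Proof.
rewrite /infection_time; case: (f v) => [[u t']|] /=; last by constructor; case.
by apply: (iffP eqP) => [[->]|[w [_ ->]]]; first exists u.
Qed.

Lemma timetable_infection_log (f : chain V Tmax) :
  timetable (infection_log f) = [set x | infection_time f x.1 == Some x.2].
Proof.
apply/setP => -[v t]; rewrite !inE /=.
by apply/existsP/infection_timeP => -[u fv]; exists u; rewrite ?inE in fv *; apply/eqP.
Qed.

Variables (G : temporal_graph V Tmax) (delta : nat) (S : {set V * time}).

Lemma infected_at_of_agree_before (f1 f2 : chain V Tmax) (t : time) :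
  is_infection_chain G delta S f1 -> is_infection_chain G delta S f2 ->
  (forall w (t' : time), t' < t ->
     (infection_time f1 w == Some t') = (infection_time f2 w == Some t')) ->
  forall v, infection_time f1 v == Some t -> infection_time f2 v == Some t.
Proof.
move=> [sound1 _] [_ complete2] agree v /infection_timeP[u f1v].
have susceptible2 : susceptible f2 v t.
  move=> u' t' f2v; rewrite leqNgt; apply/negP => lt_t't.
  have /infection_timeP[u'' f1v'] : infection_time f1 v == Some t'.
    by rewrite agree //; apply/infection_timeP; exists u'.
  by move: lt_t't; rewrite f1v in f1v'; case: f1v' => _ <-; rewrite ltnn.
apply/infection_timeP/(complete2 v t susceptible2).
case: (sound1 v u t f1v) => [[inS _]|[_ [adj_uv [lam_uv infectious1]]]].
  by left.
right; exists u; split=> //; split=> //.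
have [w [t' [f1u /andP[lt_t't le_t]]]] := infectious1.
have /infection_timeP[w' f2u] : infection_time f2 u == Some t'.
  by rewrite -agree //; apply/infection_timeP; exists w.
by exists w', t'; rewrite f2u lt_t't le_t.
Qed.

Lemma infection_time_unique (f1 f2 : chain V Tmax) :
  is_infection_chain G delta S f1 -> is_infection_chain G delta S f2 ->
  infection_time f1 =1 infection_time f2.
Proof.
move=> chain1 chain2.
have agree n v (t : time) : t = n :> nat ->
    (infection_time f1 v == Some t) = (infection_time f2 v == Some t).
  elim/ltn_ind: n v t => n IH v t tn.
  apply/idP/idP; apply: infected_at_of_agree_before => // w t' lt_t't;
    by rewrite (IH t') // -tn.
move=> v; case E1: (infection_time f1 v) => [t|].
  by apply/esym/eqP; rewrite -(agree t) ?E1.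
case E2: (infection_time f2 v) => [t|] //.
by have := agree t v t erefl; rewrite E1 E2 eqxx.
Qed.

End InfectionTimes.

Theorem mainTheorem5 (V : finType) (Tmax : nat) (G : temporal_graph V Tmax)
    (delta : nat) (S : {set V * 'I_Tmax.+1}) (L1 L2 : {set V * V * 'I_Tmax.+1}) :
  0 < delta ->
  consistent_log G delta S L1 ->
  consistent_log G delta S L2 ->
  timetable L1 = timetable L2.
Proof.
move=> _ [f1 [chain1 ->]] [f2 [chain2 ->]].
rewrite !timetable_infection_log.
by apply/setP => x; rewrite !inE (infection_time_unique chain1 chain2).
Qed.
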